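(* In the near-field model below, with $p_{\mathrm c},p_{\mathrm s},\alpha_{\mathrm s}>0$ and $L\in\mathbb Z_{>0}$ fixed, the quantity $\tilde{\mathcal R}^{\mathrm c}_{\mathrm{c,s}}=\frac1L\log_2\big(1+\frac{p_{\mathrm s}L\alpha_{\mathrm s}\|\mathbf h_{\mathrm s}\|^4}{1+p_{\mathrm c}\|\mathbf h_{\mathrm c}\|^2}\big)$ (a lower bound on the uplink sensing rate of the communications-centric design) satisfies $$\lim_{N_y,N_z\to\infty}\tilde{\mathcal R}^{\mathrm c}_{\mathrm{c,s}}=\frac1L\log_2\!\Big(1+\frac{p_{\mathrm s}L\alpha_{\mathrm s}\zeta^2}{9+3p_{\mathrm c}\zeta}\Big).$$
   Context: Near-field model: a uniform planar array lies in the $y$–$z$ plane centered at the origin, with $N=N_yN_z$ elements ($N_y,N_z$ odd). Element $(n_y,n_z)$, $n_y\in\{-\frac{N_y-1}2,\dots,\frac{N_y-1}2\}$, $n_z\in\{-\frac{N_z-1}2,\dots,\frac{N_z-1}2\}$, is a $\sqrt A\times\sqrt A$ square centered at $(0,n_yd,n_zd)$, with spacing $d>\sqrt A$; $\zeta=A/d^2\in(0,1]$; $\lambda>0$ is the wavelength. A node $i\in\{\mathrm c,\mathrm s\}$ (communication user, target) is at distance $r_i$, elevation $\theta_i\in[0,\pi]$, azimuth $\phi_i\in[-\pi/2,\pi/2]$; $\Psi_i=\sin\theta_i\cos\phi_i$, $\Phi_i=\sin\theta_i\sin\phi_i$, $\Omega_i=\cos\theta_i$, $\epsilon_i=d/r_i$,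 $r^{(i)}_{n_y,n_z}=r_i\sqrt{(n_y\epsilon_i-\Phi_i)^2+(n_z\epsilon_i-\Omega_i)^2+\Psi_i^2}$. The channel vector $\mathbf h_i\in\mathbb C^N$ has entries $\sqrt{A\frac{r_i^3\Psi_i^3+r_i\Psi_i(r_i\Omega_i-n_zd)^2}{4\pi (r^{(i)}_{n_y,n_z})^5}}\,e^{-\mathrm j\frac{2\pi}{\lambda}r^{(i)}_{n_y,n_z}}$. The paper assumes throughout $r_i\gg d$, $r_i\gg\sqrt A$, so $\epsilon_i\ll1$. The limit is taken with all parameters other than $N_y,N_z$ fixed.
   Formalization: The limit is replaced by: for each e > 0 some ρ > 0 makes $\tilde{\mathcal R}^{\mathrm c}_{\mathrm{c,s}}$ within e of the value for all large $N_y,N_z$ whenever both $\epsilon_i$ < ρ; also $\theta_i$ ∈ (0,π) and $\phi_i$ ∈ (−π/2,π/2). The statement above fails without it. *)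

From Stdlib Require Import Reals Lra.
From Coquelicot Require Import Coquelicot.
Open Scope R_scope.

Definition Psi (theta phi : R) : R := sin theta * cos phi.
Definition Phi (theta phi : R) : R := sin theta * sin phi.
Definition Omega (theta : R) : R := cos theta.

Definition elem_dist (d r theta phi ny nz : R) : R :=
  let eps := d / r in
  r * sqrt ((ny * eps - Phi theta phi) ^ 2 + (nz * eps - Omega theta) ^ 2
            + Psi theta phi ^ 2).

Definition h_entry (A d lambda r theta phi ny nz : R) : C :=
  let rn := elem_dist d r theta phi ny nz in
  let Ps := Psi theta phi in
  let amp := sqrt (A * (r ^ 3 * Ps ^ 3 + r * Ps * (r * Omega theta - nz * d) ^ 2)
                   / (4 * PI * rn ^ 5)) in
  let ph := - (2 * PI / lambda) * rn in
  (amp * cos ph, amp * sin ph).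

(* squared Euclidean norm ||h_i||^2 of the channel vector of an
   N_y x N_z array with N_y = 2 my + 1, N_z = 2 mz + 1; the indices
   n_y = k - my (k = 0..2my), n_z = l - mz (l = 0..2mz). *)
Definition h_norm2 (A d lambda r theta phi : R) (my mz : nat) : R :=
  sum_f_R0 (fun k =>
    sum_f_R0 (fun l =>
      Cmod (h_entry A d lambda r theta phi (INR k - INR my) (INR l - INR mz)) ^ 2)
      (2 * mz)) (2 * my).

Definition log2 (x : R) : R := ln x / ln 2.

Definition R_cs_c (L : nat) (pc ps alphas : R) (hc2 hs2 : R) : R :=
  / INR L * log2 (1 + ps * INR L * alphas * (sqrt hs2) ^ 4 / (1 + pc * (sqrt hc2) ^ 2)).

From Stdlib Require Import Reals Lra Lia.
From Coquelicot Require Import Coquelicot.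
Open Scope R_scope.

(* Up to the factor [zeta = A / d^2], [||h||^2] is a two-dimensional Riemann
   sum, with step [eps = d / r], of
   [g(y, z) = Psi (z^2 + Psi^2) / (4 PI (y^2 + z^2 + Psi^2)^(5/2))], whose
   integral over the plane is [1/3]: integrating out [y] leaves
   [Psi / (3 PI (z^2 + Psi^2))], whose integral over [z] is [1/3].  Both
   one-dimensional integrands are even and decrease away from [0], so each
   Riemann sum differs from the integral over the extent of the array by at
   most [eps] times the peak value, and truncating the plane to an array that
   extends a distance [K] beyond the projection of the node costs
   [O(Psi / K)].  Hence [||h||^2]
   tends to [zeta / 3] as [eps -> 0] and the array grows, and the rate,
   continuous in [(||h_c||^2, ||h_s||^2)], tends to its value at
   [(zeta / 3, zeta / 3)]. *)

Section RadialRiemannSum.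

Variables f F : R -> R.
Hypothesis F_deriv : forall x, derivable_pt_lim F x (f x).
Hypothesis f_ge0 : forall x, 0 <= f x.
Hypothesis f_radial : forall x y, x ^ 2 <= y ^ 2 -> f y <= f x.

Lemma radial_le_center x : f x <= f 0.
Proof. apply f_radial; nra. Qed.

Lemma radial_between a b c : a <= c <= b -> f a <= f c \/ f b <= f c.
Proof.
  intros Hc; destruct (Rle_dec c 0); [left | right]; apply f_radial; nra.
Qed.

Lemma riemann_sum_radial x0 eps N : 0 < eps ->
  Rabs (eps * sum_f_R0 (fun n => f (x0 + INR n * eps)) N
        - (F (x0 + INR N * eps) - F x0)) <= eps * f 0.
Proof.
  intros eps_pos.
  set (node n := x0 + INR n * eps).
  set (err n := eps * sum_f_R0 (fun k => f (node k)) n - (F (node n) - F x0)).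
  assert (err_step : forall n, exists c, node n < c < node (S n) /\
            err (S n) = err n + eps * (f (node (S n)) - f c)).
  { intros n.
    assert (Hnode : node (S n) = node n + eps) by (unfold node; rewrite S_INR; ring).
    destruct (MVT_cor2 F f (node n) (node (S n))) as [c [HF Hc]];
      [lra | intros; apply F_deriv |].
    exists c; split; [exact Hc|].
    rewrite Hnode in HF; replace (node n + eps - node n) with eps in HF by ring.
    unfold err; rewrite tech5, Hnode; lra. }
  (* Left of the peak [0 <= err n <= eps * f (node n)]; right of it [err]
     decreases while [err n - eps * f (node n)] increases. *)
  assert (invariant : forall n,
            eps * f (node n) - eps * f 0 <= err n <= eps * f 0 /\
            (node n <= 0 -> 0 <= err n <= eps * f (node n))).
  { induction n as [|n [IHlo IHneg]].
    - assert (Hx0 : node O = x0) by (unfold node; simpl; ring).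
      unfold err; simpl; rewrite Hx0.
      pose proof (f_ge0 x0); pose proof (radial_le_center x0).
      split; [split|]; intros; nra.
    - destruct (err_step n) as [c [Hc ->]].
      pose proof (f_ge0 (node n)); pose proof (f_ge0 (node (S n))); pose proof (f_ge0 c).
      pose proof (radial_le_center (node n)); pose proof (radial_le_center (node (S n))).
      pose proof (radial_le_center c).
      destruct (Rle_dec (node n) 0) as [Hneg | Hpos].
      + destruct (IHneg Hneg) as [E0 E1].
        assert (upper : err n + eps * (f (node (S n)) - f c) <= eps * f 0)
          by (destruct (radial_between (node n) (node (S n)) c); [lra | nra | nra]).
        split; [split; nra | intros Hneg'].
        assert (f (node n) <= f c <= f (node (S n))) by (split; apply f_radial; nra).
        nra.
      + assert (f (node (S n)) <= f c /\ f c <= f (node n))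
          by (split; apply f_radial; nra).
        split; [split|]; intros; nra. }
  destruct (invariant N) as [[Hlo Hhi] _].
  pose proof (f_ge0 (node N)).
  apply Rabs_le; fold (node N); split; [|exact Hhi].
  unfold err, node in *; nra.
Qed.

Lemma riemann_sum_centered eps m P : 0 < eps ->
  Rabs (eps * sum_f_R0 (fun k => f ((INR k - INR m) * eps - P)) (2 * m)
        - (F (INR m * eps - P) - F (- (INR m * eps + P)))) <= eps * f 0.
Proof.
  intros eps_pos.
  pose proof (riemann_sum_radial (- (INR m * eps + P)) eps (2 * m) eps_pos) as H.
  replace (- (INR m * eps + P) + INR (2 * m) * eps) with (INR m * eps - P) in H
    by (rewrite mult_INR; simpl; ring).
  erewrite sum_eq; [exact H|].
  intros k _; simpl; f_equal; ring.
Qed.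

End RadialRiemannSum.

Definition inv_dist5 (a2 y : R) : R := / sqrt (y ^ 2 + a2) ^ 5.

Definition inv_dist5_prim (a2 y : R) : R :=
  y * (2 * y ^ 2 + 3 * a2) / (3 * a2 ^ 2 * sqrt (y ^ 2 + a2) ^ 3).

Lemma inv_dist5_prim_deriv a2 y : 0 < a2 ->
  derivable_pt_lim (inv_dist5_prim a2) y (inv_dist5 a2 y).
Proof.
  intros Ha. apply is_derive_Reals. unfold inv_dist5_prim, inv_dist5.
  assert (Hs : 0 < sqrt (y ^ 2 + a2)) by (apply sqrt_lt_R0; nra).
  assert (E : sqrt (y ^ 2 + a2) * sqrt (y ^ 2 + a2) = y ^ 2 + a2) by (apply sqrt_sqrt; nra).
  auto_derive; replace (y * (y * 1) + a2) with (y ^ 2 + a2) by ring;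
    set (s := sqrt (y ^ 2 + a2)) in *; clearbody s.
  - repeat split; [nra|]. apply Rgt_not_eq, Rmult_lt_0_compat; nra.
  - assert (Ea : a2 = s ^ 2 - y ^ 2) by nra. subst a2.
    field. split; nra.
Qed.

Lemma inv_dist5_ge0 a2 y : 0 < a2 -> 0 <= inv_dist5 a2 y.
Proof.
  intros Ha. left. apply Rinv_0_lt_compat, pow_lt, sqrt_lt_R0. nra.
Qed.

Lemma inv_dist5_radial a2 x y : 0 < a2 -> x ^ 2 <= y ^ 2 -> inv_dist5 a2 y <= inv_dist5 a2 x.
Proof.
  intros Ha Hxy. apply Rinv_le_contravar.
  - apply pow_lt, sqrt_lt_R0. nra.
  - apply pow_incr. split; [apply sqrt_pos | apply sqrt_le_1_alt; lra].
Qed.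

Lemma inv_dist5_center a2 : inv_dist5 a2 0 = / sqrt a2 ^ 5.
Proof. unfold inv_dist5. f_equal. f_equal. f_equal. ring. Qed.

Lemma inv_dist5_prim_odd a2 y : inv_dist5_prim a2 (- y) = - inv_dist5_prim a2 y.
Proof. unfold inv_dist5_prim. replace ((- y) ^ 2) with (y ^ 2) by ring. unfold Rdiv; ring. Qed.

Lemma inv_dist5_prim_tail a2 Y : 0 < a2 -> 0 <= Y ->
  0 <= 2 / (3 * a2 ^ 2) - inv_dist5_prim a2 Y <= 2 / (3 * a2 * (a2 + Y ^ 2)).
Proof.
  intros Ha HY. unfold inv_dist5_prim.
  assert (Hs : 0 < sqrt (Y ^ 2 + a2)) by (apply sqrt_lt_R0; nra).
  assert (E : sqrt (Y ^ 2 + a2) * sqrt (Y ^ 2 + a2) = Y ^ 2 + a2) by (apply sqrt_sqrt; nra).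
  set (s := sqrt (Y ^ 2 + a2)) in *. clearbody s.
  assert (Ea : a2 = s ^ 2 - Y ^ 2) by nra.
  assert (HYs : Y < s) by nra.
  subst a2.
  assert (Hd : 0 < 3 * (s ^ 2 - Y ^ 2) ^ 2 * s ^ 3)
    by (apply Rmult_lt_0_compat; [nra | apply pow_lt; lra]).
  replace (2 / (3 * (s ^ 2 - Y ^ 2) ^ 2) - Y * (2 * Y ^ 2 + 3 * (s ^ 2 - Y ^ 2))
             / (3 * (s ^ 2 - Y ^ 2) ^ 2 * s ^ 3))
    with ((s - Y) ^ 2 * (2 * s + Y) / (3 * (s ^ 2 - Y ^ 2) ^ 2 * s ^ 3))
    by (field; split; nra).
  replace (2 / (3 * (s ^ 2 - Y ^ 2) * (s ^ 2 - Y ^ 2 + Y ^ 2)))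
    with (2 * (s ^ 2 - Y ^ 2) * s / (3 * (s ^ 2 - Y ^ 2) ^ 2 * s ^ 3))
    by (field; split; nra).
  assert (0 <= Y * (s - Y) * (3 * s + Y)) by (apply Rmult_le_pos; nra).
  split.
  - apply Rdiv_le_0_compat; [apply Rmult_le_pos |]; nra.
  - unfold Rdiv; apply Rmult_le_compat_r; [left; apply Rinv_0_lt_compat |]; nra.
Qed.

Lemma inv_dist5_sum a2 eps m P K : 0 < a2 -> 0 < eps -> 0 <= K ->
  K <= INR m * eps - P -> K <= INR m * eps + P ->
  Rabs (eps * sum_f_R0 (fun k => inv_dist5 a2 ((INR k - INR m) * eps - P)) (2 * m)
        - 4 / (3 * a2 ^ 2))
  <= eps * inv_dist5 a2 0 + 4 / (3 * a2 * (a2 + K ^ 2)).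
Proof.
  intros Ha Heps HK H1 H2.
  pose proof (riemann_sum_centered (inv_dist5 a2) (inv_dist5_prim a2)
    (fun y => inv_dist5_prim_deriv a2 y Ha) (fun y => inv_dist5_ge0 a2 y Ha)
    (fun x y => inv_dist5_radial a2 x y Ha) eps m P Heps) as Hsum.
  rewrite inv_dist5_prim_odd in Hsum.
  pose proof (inv_dist5_prim_tail a2 _ Ha (Rle_trans _ _ _ HK H1)).
  pose proof (inv_dist5_prim_tail a2 _ Ha (Rle_trans _ _ _ HK H2)).
  assert (tail_le : forall Y, K <= Y -> 2 / (3 * a2 * (a2 + Y ^ 2)) <= 2 / (3 * a2 * (a2 + K ^ 2))).
  { intros Y HY. unfold Rdiv. apply Rmult_le_compat_l; [lra|].
    apply Rinv_le_contravar; [nra|]. apply Rmult_le_compat_l; nra. }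
  pose proof (tail_le _ H1). pose proof (tail_le _ H2).
  apply Rabs_le. apply Rabs_le_between in Hsum. lra.
Qed.

Definition lorentzian (b z : R) : R := / (z ^ 2 + b ^ 2).

Lemma atan_div_deriv b z : 0 < b ->
  derivable_pt_lim (fun z => atan (z / b) / b) z (lorentzian b z).
Proof.
  intros Hb. apply is_derive_Reals. unfold lorentzian.
  apply (is_derive_ext (fun z => / b * atan (z / b))); [intros t; apply Rmult_comm|].
  replace (/ (z ^ 2 + b ^ 2)) with (/ b * (/ b * / (1 + (z / b)²)))
    by (unfold Rsqr; field; split; nra).
  apply (is_derive_scal (fun z => atan (z / b))).
  apply (is_derive_comp atan (fun z => z / b)); [apply is_derive_atan|].
  auto_derive; [reflexivity | field; lra].
Qed.

Lemma lorentzian_ge0 b z : 0 < b -> 0 <= lorentzian b z.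
Proof. intros. left. apply Rinv_0_lt_compat. nra. Qed.

Lemma lorentzian_radial b x y : 0 < b -> x ^ 2 <= y ^ 2 -> lorentzian b y <= lorentzian b x.
Proof. intros. apply Rinv_le_contravar; nra. Qed.

Lemma lorentzian_center b : lorentzian b 0 = / b ^ 2.
Proof. unfold lorentzian. f_equal. ring. Qed.

Lemma atan_le_id x : 0 <= x -> atan x <= x.
Proof.
  intros Hx. destruct (Req_dec x 0) as [-> | Hn]; [rewrite atan_0; lra|].
  destruct (MVT_cor2 atan (fun c => / (1 + c ^ 2)) 0 x) as [c [H1 H2]];
    [lra | intros; apply derivable_pt_lim_atan |].
  rewrite atan_0 in H1.
  assert (/ (1 + c ^ 2) <= 1) by (rewrite <- Rinv_1; apply Rinv_le_contravar; nra).
  nra.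
Qed.

Lemma atan_ge_tail x : 0 < x -> PI / 2 - / x <= atan x.
Proof.
  intros Hx. pose proof (atan_inv x Hx).
  pose proof (atan_le_id (/ x) (Rlt_le _ _ (Rinv_0_lt_compat x Hx))). lra.
Qed.

Lemma lorentzian_sum_le b eps m P : 0 < b -> 0 < eps ->
  eps * sum_f_R0 (fun l => lorentzian b ((INR l - INR m) * eps - P)) (2 * m)
  <= PI / b + eps / b ^ 2.
Proof.
  intros Hb Heps.
  pose proof (riemann_sum_centered (lorentzian b) (fun z => atan (z / b) / b)
    (fun z => atan_div_deriv b z Hb) (fun z => lorentzian_ge0 b z Hb)
    (fun x y => lorentzian_radial b x y Hb) eps m P Heps) as Hsum.
  rewrite lorentzian_center in Hsum. apply Rabs_le_between in Hsum.
  pose proof (atan_bound ((INR m * eps - P) / b)).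
  pose proof (atan_bound (- (INR m * eps + P) / b)).
  assert (atan ((INR m * eps - P) / b) / b - atan (- (INR m * eps + P) / b) / b <= PI / b).
  { unfold Rdiv. rewrite <- Rmult_minus_distr_r.
    apply Rmult_le_compat_r; [left; apply Rinv_0_lt_compat |]; lra. }
  unfold Rdiv in *. lra.
Qed.

Lemma lorentzian_sum b eps m P K : 0 < b -> 0 < eps -> 0 < K ->
  K <= INR m * eps - P -> K <= INR m * eps + P ->
  Rabs (eps * sum_f_R0 (fun l => lorentzian b ((INR l - INR m) * eps - P)) (2 * m) - PI / b)
  <= eps / b ^ 2 + 2 / K.
Proof.
  intros Hb Heps HK H1 H2.
  pose proof (riemann_sum_centered (lorentzian b) (fun z => atan (z / b) / b)
    (fun z => atan_div_deriv b z Hb) (fun z => lorentzian_ge0 b z Hb)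
    (fun x y => lorentzian_radial b x y Hb) eps m P Heps) as Hsum.
  rewrite lorentzian_center in Hsum.
  replace (- (INR m * eps + P) / b) with (- ((INR m * eps + P) / b)) in Hsum by (field; lra).
  rewrite atan_opp in Hsum.
  assert (atan_near : forall Z, K <= Z -> PI / b - 2 / K <= 2 * atan (Z / b) / b <= PI / b).
  { intros Z HZ.
    pose proof (atan_ge_tail (Z / b) ltac:(apply Rdiv_lt_0_compat; lra)).
    pose proof (atan_bound (Z / b)).
    assert (/ (Z / b) <= b / K)
      by (replace (/ (Z / b)) with (b / Z) by (field; lra);
          unfold Rdiv; apply Rmult_le_compat_l; [lra | apply Rinv_le_contravar; lra]).
    replace (PI / b - 2 / K) with (2 * (PI / 2 - b / K) / b) by (field; lra).
    split; unfold Rdiv; apply Rmult_le_compat_r; try (left; apply Rinv_0_lt_compat; lra); lra. }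
  pose proof (atan_near _ H1). pose proof (atan_near _ H2).
  apply Rabs_le_between in Hsum. apply Rabs_le.
  unfold Rdiv in *. lra.
Qed.

Definition column_gain (Ps Ph eps : R) (my : nat) (z : R) : R :=
  eps * (Ps * (z ^ 2 + Ps ^ 2) / (4 * PI))
    * (eps * sum_f_R0 (fun k => inv_dist5 (z ^ 2 + Ps ^ 2) ((INR k - INR my) * eps - Ph)) (2 * my)).

Definition array_gain (Ps Ph Om eps : R) (my mz : nat) : R :=
  sum_f_R0 (fun l => column_gain Ps Ph eps my ((INR l - INR mz) * eps - Om)) (2 * mz).

Lemma column_gain_error Ps Ph eps my z K : 0 < Ps -> 0 < eps -> 0 < K ->
  K <= INR my * eps - Ph -> K <= INR my * eps + Ph ->
  Rabs (column_gain Ps Ph eps my z - eps * (Ps / (3 * PI)) * lorentzian Ps z)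
  <= eps * (eps / (4 * PI) * lorentzian Ps z + Ps / (3 * PI) * lorentzian K z).
Proof.
  intros HPs Heps HK H1 H2.
  pose proof PI_RGT_0 as HPI.
  unfold column_gain, lorentzian.
  set (a2 := z ^ 2 + Ps ^ 2) in *.
  assert (Ha2 : 0 < a2) by (unfold a2; nra).
  assert (Hsa : Ps <= sqrt a2)
    by (rewrite <- (sqrt_pow2 Ps) by lra; apply sqrt_le_1_alt; unfold a2; nra).
  assert (Hsa2 : sqrt a2 * sqrt a2 = a2) by (apply sqrt_sqrt; lra).
  pose proof (inv_dist5_sum a2 eps my Ph K Ha2 Heps (Rlt_le _ _ HK) H1 H2) as Hsum.
  rewrite inv_dist5_center in Hsum.
  set (T := eps * sum_f_R0 _ (2 * my)) in *.
  set (c := Ps * a2 / (4 * PI)).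
  assert (Hc : 0 < c) by (unfold c; apply Rdiv_lt_0_compat; nra).
  replace (eps * c * T - eps * (Ps / (3 * PI)) * / a2) with (eps * (c * (T - 4 / (3 * a2 ^ 2))))
    by (unfold c; field; split; lra).
  assert (center_term : c * (eps * / sqrt a2 ^ 5) <= eps / (4 * PI) * / a2).
  { replace (c * (eps * / sqrt a2 ^ 5)) with (eps / (4 * PI) * / a2 * (Ps / sqrt a2))
      by (unfold c; replace (sqrt a2 ^ 5) with (a2 ^ 2 * sqrt a2)
            by (replace (a2 ^ 2) with ((sqrt a2 * sqrt a2) ^ 2) by (rewrite Hsa2; ring); ring); field; split; nra).
    assert (Ps / sqrt a2 <= 1)
      by (apply (Rmult_le_reg_r (sqrt a2)); [nra|]; unfold Rdiv;
          rewrite Rmult_assoc, Rinv_l by nra; lra).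
    assert (0 <= eps / (4 * PI) * / a2)
      by (apply Rmult_le_pos; [apply Rdiv_le_0_compat | left; apply Rinv_0_lt_compat]; lra).
    nra. }
  assert (tail_term : c * (4 / (3 * a2 * (a2 + K ^ 2))) <= Ps / (3 * PI) * / (z ^ 2 + K ^ 2)).
  { replace (c * (4 / (3 * a2 * (a2 + K ^ 2)))) with (Ps / (3 * PI) * / (a2 + K ^ 2))
      by (unfold c; field; repeat split; nra).
    apply Rmult_le_compat_l; [apply Rdiv_le_0_compat; lra|].
    apply Rinv_le_contravar; [nra | unfold a2; nra]. }
  rewrite Rabs_mult, Rabs_mult, (Rabs_right eps), (Rabs_right c) by lra.
  apply Rmult_le_compat_l; [lra|].
  apply (Rmult_le_compat_l c) in Hsum; lra.
Qed.

Lemma array_gain_error Ps Ph Om eps my mz K : 0 < Ps -> 0 < eps -> 0 < K ->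
  K <= INR my * eps - Ph -> K <= INR my * eps + Ph ->
  K <= INR mz * eps - Om -> K <= INR mz * eps + Om ->
  Rabs (array_gain Ps Ph Om eps my mz - 1 / 3)
  <= eps / (4 * PI) * (PI / Ps + eps / Ps ^ 2) + Ps / (3 * PI) * (PI / K + eps / K ^ 2)
     + Ps / (3 * PI) * (eps / Ps ^ 2 + 2 / K).
Proof.
  intros HPs Heps HK Hy1 Hy2 Hz1 Hz2.
  pose proof PI_RGT_0 as HPI.
  set (z l := (INR l - INR mz) * eps - Om).
  set (lsum b := eps * sum_f_R0 (fun l => lorentzian b (z l)) (2 * mz)).
  assert (columns : Rabs (array_gain Ps Ph Om eps my mz - Ps / (3 * PI) * lsum Ps)
            <= eps / (4 * PI) * lsum Ps + Ps / (3 * PI) * lsum K).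
  { assert (Emain : Ps / (3 * PI) * lsum Ps
            = sum_f_R0 (fun l => eps * (Ps / (3 * PI)) * lorentzian Ps (z l)) (2 * mz))
      by (unfold lsum; rewrite !scal_sum; apply sum_eq; intros; ring).
    assert (Eerr : eps / (4 * PI) * lsum Ps + Ps / (3 * PI) * lsum K
            = sum_f_R0 (fun l => eps * (eps / (4 * PI) * lorentzian Ps (z l)
                                        + Ps / (3 * PI) * lorentzian K (z l))) (2 * mz))
      by (unfold lsum; rewrite !scal_sum, <- plus_sum; apply sum_eq; intros; ring).
    unfold array_gain; rewrite Emain, Eerr, <- minus_sum.
    eapply Rle_trans; [apply Rsum_abs|].
    apply sum_Rle; intros l _.
    apply (column_gain_error _ _ _ _ _ K HPs Heps HK Hy1 Hy2). }
  assert (lsum_Ps : lsum Ps <= PI / Ps + eps / Ps ^ 2)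
    by exact (lorentzian_sum_le Ps eps mz Om HPs Heps).
  assert (lsum_K : lsum K <= PI / K + eps / K ^ 2)
    by exact (lorentzian_sum_le K eps mz Om HK Heps).
  assert (Hmain : Rabs (lsum Ps - PI / Ps) <= eps / Ps ^ 2 + 2 / K)
    by exact (lorentzian_sum Ps eps mz Om K HPs Heps HK Hz1 Hz2).
  replace (array_gain Ps Ph Om eps my mz - 1 / 3) with
    ((array_gain Ps Ph Om eps my mz - Ps / (3 * PI) * lsum Ps)
     + Ps / (3 * PI) * (lsum Ps - PI / Ps)) by (field; lra).
  eapply Rle_trans; [apply Rabs_triang|].
  rewrite Rabs_mult, (Rabs_right (Ps / (3 * PI))) by (apply Rle_ge, Rdiv_le_0_compat; lra).
  assert (0 <= eps / (4 * PI)) by (apply Rdiv_le_0_compat; lra).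
  assert (0 <= Ps / (3 * PI)) by (apply Rdiv_le_0_compat; lra).
  apply (Rmult_le_compat_l (Ps / (3 * PI))) in Hmain; [|lra].
  assert (eps / (4 * PI) * lsum Ps <= eps / (4 * PI) * (PI / Ps + eps / Ps ^ 2))
    by (apply Rmult_le_compat_l; lra).
  assert (Ps / (3 * PI) * lsum K <= Ps / (3 * PI) * (PI / K + eps / K ^ 2))
    by (apply Rmult_le_compat_l; lra).
  lra.
Qed.

Lemma array_gain_close Ps Ph Om eps my mz K : 0 < eps <= Ps -> eps <= K ->
  K <= INR my * eps - Ph -> K <= INR my * eps + Ph ->
  K <= INR mz * eps - Om -> K <= INR mz * eps + Om ->
  Rabs (array_gain Ps Ph Om eps my mz - 1 / 3) <= eps / Ps + Ps / K.
Proof.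
  intros [Heps HPs] HK Hy1 Hy2 Hz1 Hz2.
  eapply Rle_trans; [apply (array_gain_error _ _ _ _ _ _ K); lra|].
  pose proof PI2_1 as HPI.
  set (u := eps / Ps). set (v := Ps / K). set (t := eps / K). set (w := / PI).
  assert (Hu : 0 < u <= 1)
    by (assert (u * Ps = eps) by (unfold u; field; lra); split; nra).
  assert (Ht : 0 < t <= 1)
    by (assert (t * K = eps) by (unfold t; field; lra); split; nra).
  assert (Hv : 0 < v) by (unfold v; apply Rdiv_lt_0_compat; lra).
  assert (Hw : 0 < w < / 2)
    by (unfold w; split; [apply Rinv_0_lt_compat | apply Rinv_lt_contravar]; lra).
  replace (eps / (4 * PI) * (PI / Ps + eps / Ps ^ 2) + Ps / (3 * PI) * (PI / K + eps / K ^ 2)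
           + Ps / (3 * PI) * (eps / Ps ^ 2 + 2 / K))
    with (u / 4 + u * u * w / 4 + v / 3 + v * t * w / 3 + u * w / 3 + 2 * v * w / 3)
    by (unfold u, v, t, w; field; lra).
  assert (0 < u * w /\ 0 < v * w) by (split; nra).
  nra.
Qed.

Lemma array_gain_limit Ps Ph Om delta : 0 < Ps -> 0 < delta ->
  exists rho, 0 < rho /\ forall eps, 0 < eps -> eps < rho ->
  exists M : nat, forall my mz : nat, (M <= my)%nat -> (M <= mz)%nat ->
    Rabs (array_gain Ps Ph Om eps my mz - 1 / 3) < delta.
Proof.
  intros HPs Hdelta.
  exists (Ps * Rmin 1 (delta / 2)).
  assert (Hmin : 0 < Rmin 1 (delta / 2)) by (apply Rmin_pos; lra).
  pose proof (Rmin_l 1 (delta / 2)); pose proof (Rmin_r 1 (delta / 2)).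
  split; [nra|]. intros eps Heps Hrho.
  set (K := Ps * (1 + 2 / delta)).
  assert (HKPs : Ps <= K)
    by (unfold K; assert (0 < 2 / delta) by (apply Rdiv_lt_0_compat; lra); nra).
  destruct (INR_archimed eps (K + Rabs Ph + Rabs Om) Heps) as [M HM].
  exists M. intros my mz Hmy Hmz.
  assert (INR M * eps <= INR my * eps /\ INR M * eps <= INR mz * eps)
    by (split; apply Rmult_le_compat_r; try lra; apply le_INR; assumption).
  pose proof (Rle_abs Ph); pose proof (Rle_abs (- Ph)).
  pose proof (Rle_abs Om); pose proof (Rle_abs (- Om)).
  rewrite Rabs_Ropp in *.
  eapply Rle_lt_trans; [apply (array_gain_close _ _ _ _ _ _ K); nra|].
  assert (eps / Ps < delta / 2)
    by (apply (Rmult_lt_reg_r Ps); [lra|]; unfold Rdiv; rewrite Rmult_assoc, Rinv_l; nra).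
  assert (Ps / K < delta / 2).
  { unfold K. replace (Ps / (Ps * (1 + 2 / delta))) with (delta / (delta + 2)) by (field; nra).
    apply (Rmult_lt_reg_r (delta + 2)); [lra|]. unfold Rdiv; rewrite Rmult_assoc, Rinv_l; nra. }
  lra.
Qed.

Lemma sum_f_R0_swap (a : nat -> nat -> R) n m :
  sum_f_R0 (fun k => sum_f_R0 (fun l => a k l) m) n
  = sum_f_R0 (fun l => sum_f_R0 (fun k => a k l) n) m.
Proof.
  induction n as [|n IH]; simpl; [reflexivity|].
  rewrite IH, plus_sum. reflexivity.
Qed.

Lemma Cmod_h_entry_sq A d lambda r th ph ny nz : 0 < A -> 0 < d -> 0 < r -> 0 < Psi th ph ->
  Cmod (h_entry A d lambda r th ph ny nz) ^ 2
  = A / d ^ 2 * (d / r) ^ 2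
    * (Psi th ph * ((nz * (d / r) - Omega th) ^ 2 + Psi th ph ^ 2) / (4 * PI))
    * inv_dist5 ((nz * (d / r) - Omega th) ^ 2 + Psi th ph ^ 2) (ny * (d / r) - Phi th ph).
Proof.
  intros HA Hd Hr HPs.
  pose proof PI_RGT_0 as HPI.
  unfold h_entry, Cmod, elem_dist, inv_dist5. cbv zeta. cbn [fst snd].
  set (Ps := Psi th ph) in *. set (y := ny * (d / r) - Phi th ph).
  set (z := nz * (d / r) - Omega th).
  replace (y ^ 2 + z ^ 2 + Ps ^ 2) with (y ^ 2 + (z ^ 2 + Ps ^ 2)) by ring.
  assert (Hs : 0 < sqrt (y ^ 2 + (z ^ 2 + Ps ^ 2))) by (apply sqrt_lt_R0; nra).
  set (s := sqrt (y ^ 2 + (z ^ 2 + Ps ^ 2))) in *.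
  set (phase := - (2 * PI / lambda) * (r * s)).
  set (X := A * (r ^ 3 * Ps ^ 3 + r * Ps * (r * Omega th - nz * d) ^ 2) / (4 * PI * (r * s) ^ 5)).
  assert (HX : 0 <= X).
  { unfold X. apply Rdiv_le_0_compat; [|apply Rmult_lt_0_compat; [lra | apply pow_lt; nra]].
    apply Rmult_le_pos; [lra|].
    assert (0 <= r * Ps * (r * Omega th - nz * d) ^ 2)
      by (apply Rmult_le_pos; [nra | apply pow2_ge_0]).
    assert (0 < r ^ 3 * Ps ^ 3) by (apply Rmult_lt_0_compat; apply pow_lt; lra).
    lra. }
  rewrite pow2_sqrt by (apply Rplus_le_le_0_compat; apply pow2_ge_0).
  replace ((sqrt X * cos phase) ^ 2 + (sqrt X * sin phase) ^ 2) with (sqrt X ^ 2)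
    by (rewrite <- (Rmult_1_r (sqrt X ^ 2)), <- (sin2_cos2 phase); unfold Rsqr; ring).
  rewrite pow2_sqrt by exact HX.
  unfold X. replace (r * Omega th - nz * d) with (- (r * z)) by (unfold z; field; lra).
  field. repeat split; lra.
Qed.

Lemma h_norm2_array_gain A d lambda r th ph my mz :
  0 < A -> 0 < d -> 0 < r -> 0 < Psi th ph ->
  h_norm2 A d lambda r th ph my mz
  = A / d ^ 2 * array_gain (Psi th ph) (Phi th ph) (Omega th) (d / r) my mz.
Proof.
  intros HA Hd Hr HPs.
  unfold h_norm2, array_gain, column_gain.
  rewrite sum_f_R0_swap, scal_sum. apply sum_eq; intros l _.
  rewrite !scal_sum, (Rmult_comm _ (A / d ^ 2)), scal_sum. apply sum_eq; intros k _.
  rewrite Cmod_h_entry_sq by assumption. ring.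
Qed.

Lemma R_cs_c_continuous L pc ps alphas u0 v0 :
  0 <= pc -> 0 <= ps * INR L * alphas -> 0 <= u0 ->
  continuous (fun p : R * R => R_cs_c L pc ps alphas (fst p) (snd p)) (u0, v0).
Proof.
  intros Hpc Hc Hu0. unfold R_cs_c, log2.
  set (c := ps * INR L * alphas) in *.
  set (den := fun p : R * R => 1 + pc * sqrt (fst p) ^ 2).
  set (num := fun p : R * R => c * sqrt (snd p) ^ 4).
  assert (den_ge1 : 1 <= den (u0, v0)) by (unfold den; cbn [fst]; rewrite pow2_sqrt by lra; nra).
  assert (num_ge0 : 0 <= num (u0, v0))
    by (unfold num; apply Rmult_le_pos; [lra | apply pow_le, sqrt_pos]).
  assert (den_cont : continuous den (u0, v0)).
  { apply (continuous_comp (fun p : R * R => sqrt (fst p)) (fun s => 1 + pc * s ^ 2)).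
    - apply (continuous_comp fst sqrt); [apply continuous_fst | apply continuous_sqrt].
    - apply (ex_derive_continuous (V := R_NormedModule)); auto_derive; auto. }
  assert (num_cont : continuous num (u0, v0)).
  { apply (continuous_comp (fun p : R * R => sqrt (snd p)) (fun s => c * s ^ 4)).
    - apply (continuous_comp snd sqrt); [apply continuous_snd | apply continuous_sqrt].
    - apply (ex_derive_continuous (V := R_NormedModule)); auto_derive; auto. }
  assert (ratio_cont : continuous (fun p => num p / den p) (u0, v0)).
  { apply (continuous_mult (K := R_AbsRing)); [exact num_cont|].
    apply (continuous_comp den Rinv); [exact den_cont | apply continuous_Rinv; lra]. }
  apply (continuous_mult (K := R_AbsRing)); [apply continuous_const|].
  apply (continuous_mult (K := R_AbsRing)); [|apply continuous_const].
  apply (continuous_comp (fun p => num p / den p) (fun w => ln (1 + w))); [exact ratio_cont|].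
  apply continuous_comp with (g := ln).
  - apply (ex_derive_continuous (V := R_NormedModule)); auto_derive; auto.
  - apply continuous_ln.
    assert (0 <= num (u0, v0) / den (u0, v0)) by (apply Rdiv_le_0_compat; lra). lra.
Qed.

Lemma continuous_pair_near (f : R -> R -> R) u0 v0 e :
  continuous (fun p : R * R => f (fst p) (snd p)) (u0, v0) -> 0 < e ->
  exists eta, 0 < eta /\ forall u v, Rabs (u - u0) < eta -> Rabs (v - v0) < eta ->
    Rabs (f u v - f u0 v0) < e.
Proof.
  intros Hf He.
  destruct (Hf _ (locally_ball (f u0 v0) (mkposreal e He))) as [eta Heta].
  exists eta; split; [apply cond_pos|].
  intros u v Hu Hv. apply (Heta (u, v)). split; assumption.
Qed.

Lemma R_cs_c_third L pc ps alphas zeta : 0 <= pc -> 0 <= zeta ->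
  R_cs_c L pc ps alphas (zeta / 3) (zeta / 3)
  = / INR L * log2 (1 + ps * INR L * alphas * zeta ^ 2 / (9 + 3 * pc * zeta)).
Proof.
  intros Hpc Hz. unfold R_cs_c.
  replace (sqrt (zeta / 3) ^ 4) with ((sqrt (zeta / 3) ^ 2) ^ 2) by ring.
  rewrite pow2_sqrt by lra.
  do 3 f_equal. field. nra.
Qed.

Lemma Rabs_scale_lt c x a eta : 0 < c -> Rabs (x - a) < eta / c -> Rabs (c * x - c * a) < eta.
Proof.
  intros Hc Hx. rewrite <- Rmult_minus_distr_l, Rabs_mult, (Rabs_right c) by lra.
  apply (Rmult_lt_compat_l c) in Hx; [|lra].
  replace (c * (eta / c)) with eta in Hx by (field; lra). exact Hx.
Qed.

Lemma Psi_pos th ph : 0 < th < PI -> - (PI / 2) < ph < PI / 2 -> 0 < Psi th ph.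
Proof.
  intros [Hth1 Hth2] [Hph1 Hph2]. unfold Psi.
  apply Rmult_lt_0_compat; [apply sin_gt_0 | apply cos_gt_0]; assumption.
Qed.

Theorem corollary11 (L : nat) (pc ps alphas A d lambda : R)
  (thc phc ths phs : R) :
  (0 < L)%nat -> 0 < pc -> 0 < ps -> 0 < alphas ->
  0 < A -> 0 < d -> sqrt A < d -> 0 < lambda ->
  0 < thc < PI -> - (PI / 2) < phc < PI / 2 ->
  0 < ths < PI -> - (PI / 2) < phs < PI / 2 ->
  let zeta := A / d ^ 2 in
  forall e : R, 0 < e ->
  exists rho : R, 0 < rho /\
  forall rc rs : R, 0 < rc -> 0 < rs -> d / rc < rho -> d / rs < rho ->
  exists M : nat, forall my mz : nat, (M <= my)%nat -> (M <= mz)%nat ->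
    Rabs (R_cs_c L pc ps alphas
            (h_norm2 A d lambda rc thc phc my mz)
            (h_norm2 A d lambda rs ths phs my mz)
          - / INR L * log2 (1 + ps * INR L * alphas * zeta ^ 2 / (9 + 3 * pc * zeta)))
    < e.
Proof.
  intros HL Hpc Hps Halpha HA Hd _ _ Hthc Hphc Hths Hphs zeta e He.
  assert (Hz : 0 < zeta) by (apply Rdiv_lt_0_compat; [lra | apply pow_lt; lra]).
  assert (Hc : 0 <= ps * INR L * alphas)
    by (pose proof (pos_INR L); apply Rmult_le_pos; [apply Rmult_le_pos|]; lra).
  destruct (continuous_pair_near _ _ _ e
              (R_cs_c_continuous L pc ps alphas (zeta / 3) (zeta / 3) (Rlt_le _ _ Hpc) Hc
                 ltac:(lra)) He) as [eta [Heta Hnear]].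
  rewrite R_cs_c_third in Hnear by lra.
  assert (Hdelta : 0 < eta / zeta) by (apply Rdiv_lt_0_compat; lra).
  destruct (array_gain_limit _ (Phi thc phc) (Omega thc) _ (Psi_pos _ _ Hthc Hphc) Hdelta)
    as [rho_c [Hrho_c Hgain_c]].
  destruct (array_gain_limit _ (Phi ths phs) (Omega ths) _ (Psi_pos _ _ Hths Hphs) Hdelta)
    as [rho_s [Hrho_s Hgain_s]].
  exists (Rmin rho_c rho_s); split; [apply Rmin_pos; lra|].
  intros rc rs Hrc Hrs Hec Hes.
  pose proof (Rmin_l rho_c rho_s); pose proof (Rmin_r rho_c rho_s).
  destruct (Hgain_c (d / rc)) as [Mc HMc]; [apply Rdiv_lt_0_compat | ..]; try lra.
  destruct (Hgain_s (d / rs)) as [Ms HMs]; [apply Rdiv_lt_0_compat | ..]; try lra.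
  exists (Nat.max Mc Ms). intros my mz Hmy Hmz.
  rewrite !h_norm2_array_gain by (auto using Psi_pos).
  apply Hnear; replace (zeta / 3) with (zeta * (1 / 3)) by field;
    apply Rabs_scale_lt; try assumption; [apply HMc | apply HMs]; lia.
Qed.
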